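(* Let $\tau$ be a signature, $\mathcal F$ an ultrafilter on $I$, $\mathcal G$ an ultrafilter on $J$, $\{\mathcal A_{i,j}:i\in I,j\in J\}$ a family of $\tau$-structures, and $\phi\in SO(\tau)$. For $j\in J$ let $(\mathcal A_j,\Upsilon_j)$ be the decomposable-Henkin model formed from $\{\mathcal A_{i,j}:i\in I\}$ by $\mathcal F$, and let $(\mathcal A,\Upsilon)$ be the decomposable-Henkin model formed from $\{\mathcal A_{i,j}:(i,j)\in I\times J\}$ by $\mathcal F\times\mathcal G$. Then $\{j\in J:(\mathcal A_j,\Upsilon_j)\models_\epsilon\phi\}\in\mathcal G$ if and only if $(\mathcal A,\Upsilon)\models_\epsilon\phi$.
   Context: $SO(\tau)$: second-order $\tau$-formulas with relation variables only. For ultrafilters $\mathcal F$ on $I$, $\mathcal G$ on $J$, the product $\mathcal F\times\mathcal G$ on $I\times J$ is given by $X\in\mathcal F\times\mathcal G$ iff $\{j:\{i:(i,j)\in X\}\in\mathcal F\}\in\mathcal G$. Given a family $\{\mathcal B_k:k\in L\}$ of $\tau$-structures and an ultrafilter $\mathcal H$ on $L$, with $\mathcal B=\prod_k\mathcal B_k/\mathcal H$, a relation $R\subseteq B^m$ ($m\geq1$) is decomposable if $R=\prod_k R_k/\mathcal H$ for some $R_k\subseteq B_k^m$; the decomposable-Henkin model formed from the family by $\mathcal H$ is the pair $(\mathcal B,\Upsilon)$ where $\Upsilon$ is the set of all decomposable relations. Henkin semantics $\models_\epsilon$: formulas are evaluated in $(\mathcal B,\Upsilon)$ under assignments sending each $m$-ary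 relation variable to an $m$-ary relation in $\Upsilon$ (and first-order variables to elements of $B$); first-order parts are evaluated in the expansion of $\mathcal B$ by the assigned relations as usual, and second-order quantifiers $\exists R$, $\forall R$ range only over the relations in $\Upsilon$ of the appropriate arity. $(\mathcal B,\Upsilon)\models_\epsilon\phi$ means $\phi$ holds under all assignments. *)

From Stdlib Require Import ClassicalEpsilon.
From mathcomp Require Import ssreflect ssrfun ssrbool eqtype ssrnat fintype.

Set Implicit Arguments.
Unset Strict Implicit.
Unset Printing Implicit Defensive.

Definition ultrafilter (I : Type) (U : (I -> Prop) -> Prop) : Prop :=
  [/\ U (fun _ => True),
      ~ U (fun _ => False),
      (forall X Y : I -> Prop, U X -> (forall i, X i -> Y i) -> U Y),
      (forall X Y : I -> Prop, U X -> U Y -> U (fun i => X i /\ Y i))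
    & (forall X : I -> Prop, U X \/ U (fun i => ~ X i))].

Definition prod_uf (I J : Type) (F : (I -> Prop) -> Prop) (G : (J -> Prop) -> Prop)
  : (I * J -> Prop) -> Prop :=
  fun X => G (fun j => F (fun i => X (i, j))).

Record signature := Signature {
  rel_sym : Type;
  rel_ar : rel_sym -> nat;
  fun_sym : Type;            (* constants are 0-ary function symbols *)
  fun_ar : fun_sym -> nat }.

Record structure (tau : signature) := Structure {
  carrier :> Type;
  dom_ne : inhabited carrier;
  interp_fun : forall f : fun_sym tau, ('I_(fun_ar f) -> carrier) -> carrier;
  interp_rel : forall r : rel_sym tau, ('I_(rel_ar r) -> carrier) -> Prop }.

(* ---------- Second-order formulas SO(tau), relation variables only ---------- *)

Inductive term (tau : signature) : Type :=
| tvar : nat -> term tau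
| tapp : forall f : fun_sym tau, ('I_(fun_ar f) -> term tau) -> term tau.

(* A relation variable is a pair (m, X) and has arity m.+1 (>= 1). *)
Inductive formula (tau : signature) : Type :=
| fEq : term tau -> term tau -> formula tau
| fRel : forall r : rel_sym tau, ('I_(rel_ar r) -> term tau) -> formula tau
| fRVar : forall m X : nat, ('I_m.+1 -> term tau) -> formula tau
| fFalse : formula tau
| fNot : formula tau -> formula tau
| fAnd : formula tau -> formula tau -> formula tau
| fOr : formula tau -> formula tau -> formula tau
| fImp : formula tau -> formula tau -> formula tau
| fEx : nat -> formula tau -> formula tau
| fAll : nat -> formula tau -> formula tau
| fEx2 : nat -> nat -> formula tau -> formula tau
| fAll2 : nat -> nat -> formula tau -> formula tau.

Section Semantics.
Variable tau : signature.
Variable M : structure tau.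

Definition rel_of (m : nat) := ('I_m.+1 -> M) -> Prop.
Definition fo_asg := nat -> M.
Definition so_asg := forall m : nat, nat -> rel_of m.

Fixpoint teval (s : fo_asg) (t : term tau) : M :=
  match t with
  | tvar x => s x
  | tapp f args => @interp_fun tau M f (fun i => teval s (args i))
  end.

Definition upd1 (s : fo_asg) (x : nat) (a : M) : fo_asg :=
  fun y => if Nat.eqb y x then a else s y.

Definition upd2 (S : so_asg) (m X : nat) (R : rel_of m) : so_asg :=
  fun m' => match PeanoNat.Nat.eq_dec m m' with
            | left e => fun X' => if Nat.eqb X' X
                                  then eq_rect m rel_of R m' e else S m' X'
            | right _ => S m'
            end.

Variable Upsilon : forall m : nat, rel_of m -> Prop.

Fixpoint hsat (s : fo_asg) (S : so_asg) (phi : formula tau) : Prop :=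
  match phi with
  | fEq t1 t2 => teval s t1 = teval s t2
  | fRel r args => @interp_rel tau M r (fun i => teval s (args i))
  | fRVar m X args => S m X (fun i => teval s (args i))
  | fFalse => False
  | fNot p => ~ hsat s S p
  | fAnd p q => hsat s S p /\ hsat s S q
  | fOr p q => hsat s S p \/ hsat s S q
  | fImp p q => hsat s S p -> hsat s S q
  | fEx x p => exists a : M, hsat (upd1 s x a) S p
  | fAll x p => forall a : M, hsat (upd1 s x a) S p
  | fEx2 m X p => exists R : rel_of m, Upsilon R /\ hsat s (upd2 S X R) p
  | fAll2 m X p => forall R : rel_of m, Upsilon R -> hsat s (upd2 S X R) p
  end.

Definition hmodels (phi : formula tau) : Prop :=
  forall (s : fo_asg) (S : so_asg), (forall m X, Upsilon (S m X)) -> hsat s S phi.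

End Semantics.

Section Ultraproduct.
Variables (tau : signature) (L : Type) (H : (L -> Prop) -> Prop)
          (B : L -> structure tau).

Definition uclass (f : forall k, B k) : (forall k, B k) -> Prop :=
  fun g => H (fun k => f k = g k).

(* elements of prod_k B_k / H are the equivalence classes *)
Definition up_car := {c : (forall k, B k) -> Prop | exists f, c = uclass f}.

Definition uinj (f : forall k, B k) : up_car :=
  exist _ (uclass f) (ex_intro _ f erefl).

Definition urep (c : up_car) : forall k, B k :=
  proj1_sig (constructive_indefinite_description _ (proj2_sig c)).

Definition up_point : forall k, B k :=
  fun k => epsilon (dom_ne (B k)) (fun _ => True).

Definition ultraproduct : structure tau :=
  {| carrier := up_car;
     dom_ne := inhabits (uinj up_point);
     interp_fun := fun f c => uinj (fun k => @interp_fun tau (B k) f (fun i => urep (c i) k));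
     interp_rel := fun r c => H (fun k => @interp_rel tau (B k) r (fun i => urep (c i) k)) |}.

Definition prod_rel (n : nat) (Rk : forall k, ('I_n -> B k) -> Prop)
  : ('I_n -> ultraproduct) -> Prop :=
  fun c => H (fun k => Rk k (fun i => urep (c i) k)).

Definition decomposable (m : nat) (R : rel_of ultraproduct m) : Prop :=
  exists Rk : forall k, ('I_m.+1 -> B k) -> Prop, R = prod_rel Rk.

End Ultraproduct.

Arguments decomposable {tau L} H B m R.
Arguments hmodels {tau} M Upsilon phi.
Arguments ultraproduct {tau L} H B.

Definition dh_models (tau : signature) (L : Type) (H : (L -> Prop) -> Prop)
  (B : L -> structure tau) (phi : formula tau) : Prop :=
  hmodels (ultraproduct H B) (decomposable H B) phi.

From Stdlib Require Import ClassicalEpsilon Classical.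
From Stdlib Require Import FunctionalExtensionality PropExtensionality ProofIrrelevance.
From mathcomp Require Import ssreflect ssrfun ssrbool eqtype ssrnat fintype.

(* Lemma 2.16 is an instance of Los's theorem for decomposable-Henkin models:
   (prod_k B_k / H, Upsilon) |=_eps phi iff phi holds in H-many B_k under the
   full second-order semantics.  A decomposable relation is exactly a family of
   arbitrary relations on the factors, so Henkin quantifiers in the ultraproduct
   become full quantifiers in the factors; a witness in the ultraproduct is
   assembled from witnesses in the factors by choice.  Applied to F on each
   family (A i j)_i and to F x G on the whole family, both sides of the lemma
   become G {j | F {i | A i j |= phi}}. *)

Definition all_rels {tau : signature} (M : structure tau) : forall m, rel_of M m -> Prop :=
  fun _ _ => True.

Set Implicit Arguments.
Unset Strict Implicit.

Section Ultrafilter.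
Variables (L : Type) (U : (L -> Prop) -> Prop).
Hypothesis hU : ultrafilter U.

Lemma uf_setT : U (fun _ => True).
Proof. by case: hU. Qed.

Lemma uf_mono (X Y : L -> Prop) : U X -> (forall k, X k -> Y k) -> U Y.
Proof. by case: hU => _ _ mono _ _; apply: mono. Qed.

Lemma uf_congr (X Y : L -> Prop) : (forall k, X k <-> Y k) -> U X <-> U Y.
Proof. by move=> XY; split=> UX; apply: (uf_mono UX) => k /XY. Qed.

Lemma uf_and (X Y : L -> Prop) : U (fun k => X k /\ Y k) <-> U X /\ U Y.
Proof.
split=> [UXY | [UX UY]]; last by case: hU => _ _ _ meet _; apply: meet.
by split; apply: (uf_mono UXY) => k [].
Qed.

Lemma uf_congr_ae (X Y : L -> Prop) : U (fun k => X k <-> Y k) -> U X <-> U Y.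
Proof.
move=> UXY; split=> UX; have /uf_and UXY' := conj UXY UX.
  by apply: (uf_mono UXY') => k [/[apply]].
by apply: (uf_mono UXY') => k [XY /XY].
Qed.

Lemma uf_empty (X : L -> Prop) : (forall k, ~ X k) -> ~ U X.
Proof. by move=> nX UX; case: hU => _ U0 _ _ _; apply/U0/(uf_mono UX). Qed.

Lemma uf_not (X : L -> Prop) : U (fun k => ~ X k) <-> ~ U X.
Proof.
split=> [UnX UX | nUX]; last by case: hU => _ _ _ _ /(_ X) [].
by apply: (@uf_empty (fun k => ~ X k /\ X k)) => [k []|]; last exact/uf_and.
Qed.

Lemma uf_or (X Y : L -> Prop) : U (fun k => X k \/ Y k) <-> U X \/ U Y.
Proof.
split=> [UXY | [UX | UY]]; last 2 first.
- by apply: (uf_mono UX); left.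
- by apply: (uf_mono UY); right.
apply: NNPP => /not_or_and [/uf_not UnX /uf_not UnY].
apply: (@uf_empty (fun k => (X k \/ Y k) /\ ~ X k /\ ~ Y k)) => [k|]; first tauto.
by apply uf_and; split; last apply uf_and.
Qed.

Lemma uf_imp (X Y : L -> Prop) : U (fun k => X k -> Y k) <-> (U X -> U Y).
Proof.
rewrite (uf_congr (Y := fun k => ~ X k \/ Y k)) => [|k]; last by split; [apply: imply_to_or|case].
by rewrite uf_or uf_not; split=> [[]|/imply_to_or].
Qed.

Lemma uf_forall_ord n (X : 'I_n -> L -> Prop) :
  (forall i, U (X i)) -> U (fun k => forall i, X i k).
Proof.
move=> UX; suff: forall m, m <= n -> U (fun k => forall i : 'I_n, i < m -> X i k).
  by move/(_ n (leqnn n)) => Un; apply: (uf_mono Un) => k Xk i; apply: Xk.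
elim=> [|m IHm] lt_mn; first by apply: (uf_mono uf_setT) => k _ [].
have /uf_and Um := conj (IHm (ltnW lt_mn)) (UX (Ordinal lt_mn)).
apply: (uf_mono Um) => k [Xk Xmk] i.
rewrite ltnS leq_eqVlt => /orP [/eqP i_m|]; last exact: Xk.
by have -> : i = Ordinal lt_mn by apply: val_inj.
Qed.

Section Choice.
Variables (T : L -> Type) (T_inh : forall k, inhabited (T k)).

Lemma uf_exists_choice (Q : forall k, T k -> Prop) :
  U (fun k => exists u, Q k u) -> exists f : forall k, T k, U (fun k => Q k (f k)).
Proof.
move=> UQ; exists (fun k => epsilon (T_inh k) (Q k)).
by apply: (uf_mono UQ) => k; apply: epsilon_spec.
Qed.

(* [f k] is a counterexample to [Q k] whenever there is one. *)
Lemma uf_forall_choice (Q : forall k, T k -> Prop) :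
  (forall f : forall k, T k, U (fun k => Q k (f k))) -> U (fun k => forall u, Q k u).
Proof.
move=> UQ; apply: (uf_mono (UQ (fun k => epsilon (T_inh k) (fun u => ~ Q k u)))).
move=> k Qk u; apply: NNPP => nQu.
by apply: (epsilon_spec (T_inh k) (fun u => ~ Q k u)); first exists u.
Qed.

Lemma uf_exists_iff (P : (forall k, T k) -> Prop) (Q : forall k, T k -> Prop) :
  (forall f, P f <-> U (fun k => Q k (f k))) ->
  (exists f, P f) <-> U (fun k => exists u, Q k u).
Proof.
move=> PQ; split=> [[f /PQ Uf] | /uf_exists_choice [f /PQ]]; last by exists f.
by apply: (uf_mono Uf) => k; exists (f k).
Qed.

Lemma uf_forall_iff (P : (forall k, T k) -> Prop) (Q : forall k, T k -> Prop) :
  (forall f, P f <-> U (fun k => Q k (f k))) ->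
  (forall f, P f) <-> U (fun k => forall u, Q k u).
Proof.
move=> PQ; split=> [Pf | UQ f]; first by apply: uf_forall_choice => f; apply/PQ.
by apply/PQ; apply: (uf_mono UQ).
Qed.
End Choice.
End Ultrafilter.

Lemma prod_uf_ultrafilter (I J : Type) (F : (I -> Prop) -> Prop) (G : (J -> Prop) -> Prop) :
  ultrafilter F -> ultrafilter G -> ultrafilter (prod_uf F G).
Proof.
rewrite /prod_uf => hF hG; split.
- by apply: (uf_mono hG (uf_setT hG)) => j _; apply: uf_setT.
- exact: (uf_empty hG (fun j => uf_empty hF (fun i => id))).
- move=> X Y UX XY; apply: (uf_mono hG UX) => j UXj.
  by apply: (uf_mono hF UXj) => i; apply: XY.
- move=> X Y UX UY; have /(uf_and hG) UXY := conj UX UY.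
  by apply: (uf_mono hG UXY) => j /(uf_and hF).
- move=> X; apply/(uf_or hG); apply: (uf_mono hG (uf_setT hG)) => j _.
  by case: (classic (F (fun i => X (i, j)))) => [|/(uf_not hF)]; [left|right].
Qed.

Section Ultraproduct.
Variables (tau : signature) (L : Type) (H : (L -> Prop) -> Prop) (B : L -> structure tau).
Hypothesis hH : ultrafilter H.

Lemma uinj_eq (f g : forall k, B k) : uinj H f = uinj H g <-> H (fun k => f k = g k).
Proof.
split=> [/(f_equal (@proj1_sig _ _)) /= fg | Hfg].
  have gg : uclass H g g by apply: (uf_mono hH (uf_setT hH)).
  by move: gg; rewrite -fg.
apply: subset_eq_compat; apply: functional_extensionality => h.
apply: propositional_extensionality; split=> Hh.
  by have /(uf_and hH) U2 := conj Hfg Hh; apply: (uf_mono hH U2) => k [<- <-].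
by have /(uf_and hH) U2 := conj Hfg Hh; apply: (uf_mono hH U2) => k [-> ->].
Qed.

Lemma uinj_urep (c : ultraproduct H B) : uinj H (urep c) = c.
Proof.
case: c => c ec; rewrite /urep /=.
by case: constructive_indefinite_description => f e; apply: subset_eq_compat.
Qed.

Lemma urep_uinj (f : forall k, B k) : H (fun k => urep (uinj H f) k = f k).
Proof. by apply/uinj_eq; rewrite uinj_urep. Qed.

Lemma exists_uinj (P : ultraproduct H B -> Prop) : (exists c, P c) <-> exists f, P (uinj H f).
Proof. by split=> [[c Pc] | [f Pf]]; [exists (urep c); rewrite uinj_urep | exists (uinj H f)]. Qed.

Lemma forall_uinj (P : ultraproduct H B -> Prop) : (forall c, P c) <-> forall f, P (uinj H f).
Proof. by split=> [Pc f | Pf c]; [apply: Pc | rewrite -(uinj_urep c)]. Qed.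

Lemma prod_rel_uinj n (Rk : forall k, ('I_n -> B k) -> Prop)
    (c : 'I_n -> ultraproduct H B) (g : 'I_n -> forall k, B k) :
  (forall i, c i = uinj H (g i)) -> prod_rel Rk c <-> H (fun k => Rk k (fun i => g i k)).
Proof.
move=> cg; apply: (uf_congr_ae hH).
have Ucg : H (fun k => forall i, urep (c i) k = g i k).
  by apply: (uf_forall_ord hH) => i; rewrite cg; apply: urep_uinj.
by apply: (uf_mono hH Ucg) => k /functional_extensionality ->.
Qed.

Lemma exists_decomposable m (P : rel_of (ultraproduct H B) m -> Prop) :
  (exists R, decomposable H B m R /\ P R) <-> exists Rk, P (prod_rel Rk).
Proof.
split=> [[_ [[Rk ->] PR]] | [Rk PR]]; first by exists Rk.
by exists (prod_rel Rk); split=> //; exists Rk.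
Qed.

Lemma forall_decomposable m (P : rel_of (ultraproduct H B) m -> Prop) :
  (forall R, decomposable H B m R -> P R) <-> forall Rk, P (prod_rel Rk).
Proof. by split=> [PR Rk | PR _ [Rk ->]]; apply: PR; exists Rk. Qed.

Definition represents_fo (sk : forall k, fo_asg (B k)) (s : fo_asg (ultraproduct H B)) :=
  forall x, s x = uinj H (fun k => sk k x).

Definition represents_so (Sk : forall k, so_asg (B k)) (S : so_asg (ultraproduct H B)) :=
  forall m X, S m X = prod_rel (fun k => Sk k m X).

Lemma teval_uinj sk s :
  represents_fo sk s -> forall t, teval s t = uinj H (fun k => teval (sk k) t).
Proof.
move=> sE; elim=> [x | f args IH] /=; first exact: sE.
apply/uinj_eq.
apply (prod_rel_uinj
  (fun k a => @interp_fun _ (B k) f a = interp_fun (fun i => teval (sk k) (args i))) IH).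
exact: (uf_mono hH (uf_setT hH)).
Qed.

Lemma represents_fo_upd1 sk s x (f : forall k, B k) :
  represents_fo sk s -> represents_fo (fun k => upd1 (sk k) x (f k)) (upd1 s x (uinj H f)).
Proof. by move=> sE y; rewrite /upd1; case: (Nat.eqb y x). Qed.

Lemma represents_so_upd2 Sk S m X (Rk : forall k, ('I_m.+1 -> B k) -> Prop) :
  represents_so Sk S ->
  represents_so (fun k => upd2 (Sk k) X (Rk k)) (upd2 S X (prod_rel Rk)).
Proof.
move=> SE m' X'; rewrite /upd2.
case: (PeanoNat.Nat.eq_dec m m') => [e | _]; last exact: SE.
by case: m' / e; case: (Nat.eqb X' X).
Qed.

Lemma los_hsat (sk : forall k, fo_asg (B k)) (s : fo_asg (ultraproduct H B))
    (Sk : forall k, so_asg (B k)) (S : so_asg (ultraproduct H B)) :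
  represents_fo sk s -> represents_so Sk S -> forall phi,
  hsat (decomposable H B) s S phi <-> H (fun k => hsat (all_rels (B k)) (sk k) (Sk k) phi).
Proof.
have B_inh k : inhabited (B k) := dom_ne (B k).
have rel_inh m k : inhabited (('I_m.+1 -> B k) -> Prop) := inhabits (fun _ => True).
move=> + + phi; elim: phi sk s Sk S => [t1 t2 | r args | m X args | | p IHp
  | p IHp q IHq | p IHp q IHq | p IHp q IHq | x p IHp | x p IHp | m X p IHp | m X p IHp]
  sk s Sk S sE SE /=.
- by rewrite !(teval_uinj sE); apply: uinj_eq.
- exact: (prod_rel_uinj (fun k => @interp_rel _ (B k) r) (fun i => teval_uinj sE (args i))).
- by rewrite SE; apply: (prod_rel_uinj _ (fun i => teval_uinj sE (args i))).
- by split=> [[] | ]; apply: (uf_empty hH (fun _ => id)).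
- by rewrite (IHp _ _ _ _ sE SE); symmetry; apply: (uf_not hH).
- by rewrite (IHp _ _ _ _ sE SE) (IHq _ _ _ _ sE SE); symmetry; apply: (uf_and hH).
- by rewrite (IHp _ _ _ _ sE SE) (IHq _ _ _ _ sE SE); symmetry; apply: (uf_or hH).
- by rewrite (IHp _ _ _ _ sE SE) (IHq _ _ _ _ sE SE); symmetry; apply: (uf_imp hH).
- apply: iff_trans (exists_uinj _) _; apply: (uf_exists_iff hH B_inh) => f.
  exact: (IHp _ _ _ _ (represents_fo_upd1 x f sE) SE).
- apply: iff_trans (forall_uinj _) _; apply: (uf_forall_iff hH B_inh) => f.
  exact: (IHp _ _ _ _ (represents_fo_upd1 x f sE) SE).
- apply: iff_trans (exists_decomposable _) _; apply: (uf_exists_iff hH (rel_inh m)) => Rk.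
  rewrite (IHp _ _ _ _ sE (represents_so_upd2 X Rk SE)).
  by apply: (uf_congr hH) => k; split=> [|[]].
- apply: iff_trans (forall_decomposable _) _; apply: (uf_forall_iff hH (rel_inh m)) => Rk.
  rewrite (IHp _ _ _ _ sE (represents_so_upd2 X Rk SE)).
  by apply: (uf_congr hH) => k; split=> [h _ | /(_ I)].
Qed.

Lemma los_dh_models phi :
  dh_models H B phi <-> H (fun k => hmodels (B k) (all_rels (B k)) phi).
Proof.
have asg_inh k : inhabited (fo_asg (B k) * so_asg (B k)).
  by case: (dom_ne (B k)) => b; apply: inhabits ((fun _ => b), (fun _ _ _ => True)).
split=> [Hphi | UHphi s S Sdec].
- pose sat k (a : fo_asg (B k) * so_asg (B k)) := hsat (all_rels (B k)) a.1 a.2 phi.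
  have /(uf_forall_choice hH asg_inh (Q := sat)) Uphi
      (a : forall k, fo_asg (B k) * so_asg (B k)) : H (fun k => sat k (a k)).
    have sE : represents_fo (fun k => (a k).1) (fun x => uinj H (fun k => (a k).1 x)) by [].
    have SE : represents_so (fun k => (a k).2) (fun m X => prod_rel (fun k => (a k).2 m X)) by [].
    apply (los_hsat sE SE).
    by apply: Hphi => m X; exists (fun k => (a k).2 m X).
  by apply: (uf_mono hH Uphi) => k Hk s S _; apply: (Hk (s, S)).
- pose Sk k : so_asg (B k) :=
    fun m X => proj1_sig (constructive_indefinite_description _ (Sdec m X)) k.
  have SE : represents_so Sk S.
    by move=> m X; rewrite /Sk; case: constructive_indefinite_description.
  have sE : represents_fo (fun k x => urep (s x) k) s by move=> x; rewrite uinj_urep.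
  by apply/(los_hsat sE SE); apply: (uf_mono hH UHphi) => k; apply.
Qed.
End Ultraproduct.

Unset Implicit Arguments.

Theorem lemma2p16 (tau : signature) (I J : Type)
  (F : (I -> Prop) -> Prop) (G : (J -> Prop) -> Prop)
  (hF : ultrafilter F) (hG : ultrafilter G)
  (A : I -> J -> structure tau) (phi : formula tau) :
  G (fun j => dh_models F (fun i => A i j) phi)
  <-> dh_models (prod_uf F G) (fun p : I * J => A p.1 p.2) phi.
Proof.
rewrite (los_dh_models _ (prod_uf_ultrafilter hF hG)).
by apply: (uf_congr hG) => j; apply: los_dh_models.
Qed.
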